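(* Let $H\in M_d$ be a Hamiltonian, $\beta>0$, $\epsilon>0$, and let $\{e_1,\dots,e_{d'}\}\subset\mathbb R$ be an $\epsilon$-spectral covering of $H$. For $i\in[d']$ let $\tilde P_i$ be the orthogonal projection onto the span of the eigenvectors of $H$ with eigenvalues in $(e_i-\epsilon,e_i+\epsilon)$, and let $n_i=\operatorname{tr}\tilde P_i$. Define $$\tilde{\mathcal Z}_\beta=\sum_{i=1}^{d'}n_i e^{-\beta e_i},\qquad \tilde\rho=\frac{1}{\tilde{\mathcal Z}_\beta}\sum_{i=1}^{d'}e^{-\beta e_i}\tilde P_i .$$ Then $$\Big\|\tilde\rho-\frac{e^{-\beta H}}{\mathcal Z_\beta}\Big\|_1\le\sqrt{4\epsilon\beta}.$$ Consequently, for any POVM $\{F_k\}_{k\in I}$, the distributions $p(k)=\operatorname{tr}(F_k e^{-\beta H}/\mathcal Z_\beta)$ and $\tilde p(k)=\operatorname{tr}(F_k\tilde\rho)$ satisfy $\|\tilde p-p\|_1=\sum_k|\tilde p(k)-p(k)|\le\sqrt{4\epsilon\beta}$.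
   Context: $\mathcal Z_\beta=\operatorname{tr}[e^{-\beta H}]$. For $\epsilon>0$, a set $\{e_1,\dots,e_{d'}\}\subset\mathbb R$ is an $\epsilon$-spectral covering of a Hamiltonian (Hermitian matrix) $H$ if the spectrum $\sigma(H)$ is contained in the disjoint union $\bigsqcup_{i=1}^{d'}(e_i-\epsilon,e_i+\epsilon)$ (the intervals being pairwise disjoint) and $\sigma(H)\cap(e_i-\epsilon,e_i+\epsilon)\neq\emptyset$ for each $i$. $\|X\|_1=\operatorname{tr}|X|$ is the trace norm. A POVM is a family of positive semidefinite matrices $\{F_k\}_{k\in I}$ with $\sum_k F_k=\mathbf 1$. *)

(* classical reals, hand-rolled complex numbers and d x d complex
   matrices (indices 0..d-1; entries outside the range are irrelevant). *)
From Stdlib Require Import Reals Lra List ClassicalEpsilon Factorial.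
Open Scope R_scope.

Record C := mkC { Re : R ; Im : R }.
Definition RtoC (x : R) : C := mkC x 0.
Definition C0 : C := RtoC 0.
Definition C1 : C := RtoC 1.
Definition Cadd (a b : C) : C := mkC (Re a + Re b) (Im a + Im b).
Definition Copp (a : C) : C := mkC (- Re a) (- Im a).
Definition Csub (a b : C) : C := Cadd a (Copp b).
Definition Cmul (a b : C) : C :=
  mkC (Re a * Re b - Im a * Im b) (Re a * Im b + Im a * Re b).
Definition Cconj (a : C) : C := mkC (Re a) (- Im a).
Definition Cmod (a : C) : R := sqrt (Re a * Re a + Im a * Im a).

Fixpoint Csum (n : nat) (f : nat -> C) : C :=
  match n with O => C0 | S m => Cadd (Csum m f) (f m) end.
Fixpoint Rsum (n : nat) (f : nat -> R) : R :=
  match n with O => 0 | S m => Rsum m f + f m end.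

Definition Vec := nat -> C.
Definition Mat := nat -> nat -> C.

Definition veq (d : nat) (v w : Vec) : Prop := forall i, (i < d)%nat -> v i = w i.
Definition meq (d : nat) (A B : Mat) : Prop :=
  forall i j, (i < d)%nat -> (j < d)%nat -> A i j = B i j.

Definition mzero : Mat := fun _ _ => C0.
Definition mid : Mat := fun i j => if Nat.eqb i j then C1 else C0.
Definition madd (A B : Mat) : Mat := fun i j => Cadd (A i j) (B i j).
Definition msub (A B : Mat) : Mat := fun i j => Csub (A i j) (B i j).
Definition mscale (c : C) (A : Mat) : Mat := fun i j => Cmul c (A i j).
Definition mmul (d : nat) (A B : Mat) : Mat :=
  fun i j => Csum d (fun k => Cmul (A i k) (B k j)).
Definition madj (A : Mat) : Mat := fun i j => Cconj (A j i).
Definition mtrace (d : nat) (A : Mat) : C := Csum d (fun i => A i i).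
Definition mapply (d : nat) (A : Mat) (v : Vec) : Vec :=
  fun i => Csum d (fun k => Cmul (A i k) (v k)).
Definition vdot (d : nat) (v w : Vec) : C := Csum d (fun i => Cmul (Cconj (v i)) (w i)).
Fixpoint msumn (n : nat) (f : nat -> Mat) : Mat :=
  match n with O => mzero | S m => madd (msumn m f) (f m) end.

Definition hermitian (d : nat) (A : Mat) : Prop := meq d (madj A) A.
Definition psd (d : nat) (A : Mat) : Prop :=
  hermitian d A /\ forall v : Vec, 0 <= Re (vdot d v (mapply d A v)).

Fixpoint mpow (d : nat) (A : Mat) (k : nat) : Mat :=
  match k with O => mid | S m => mmul d (mpow d A m) A end.
Definition exp_partial (d : nat) (A : Mat) (N : nat) : Mat :=
  msumn (S N) (fun k => mscale (RtoC (/ INR (fact k))) (mpow d A k)).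
Definition is_mexp (d : nat) (A M : Mat) : Prop :=
  forall i j, (i < d)%nat -> (j < d)%nat ->
    Un_cv (fun N => Re (exp_partial d A N i j)) (Re (M i j)) /\
    Un_cv (fun N => Im (exp_partial d A N i j)) (Im (M i j)).
Definition mexp (d : nat) (A : Mat) : Mat :=
  epsilon (inhabits mzero) (is_mexp d A).

Definition mabs (d : nat) (X : Mat) : Mat :=
  epsilon (inhabits mzero)
    (fun Y => psd d Y /\ meq d (mmul d Y Y) (mmul d (madj X) X)).
Definition trace_norm (d : nat) (X : Mat) : R := Re (mtrace d (mabs d X)).

Definition partition_fn (d : nat) (beta : R) (H : Mat) : R :=
  Re (mtrace d (mexp d (mscale (RtoC (- beta)) H))).
Definition gibbs (d : nat) (beta : R) (H : Mat) : Mat :=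
  mscale (RtoC (/ partition_fn d beta H)) (mexp d (mscale (RtoC (- beta)) H)).

Definition eigenvalue (d : nat) (H : Mat) (lam : C) : Prop :=
  exists v : Vec, (exists i, (i < d)%nat /\ v i <> C0) /\
                  veq d (mapply d H v) (fun i => Cmul lam (v i)).

Definition in_interval (a b : R) (lam : C) : Prop :=
  Im lam = 0 /\ a < Re lam < b.

Definition spectral_covering (d : nat) (H : Mat) (eps : R) (d' : nat) (e : nat -> R) : Prop :=
  (forall lam, eigenvalue d H lam ->
     exists i, (i < d')%nat /\ in_interval (e i - eps) (e i + eps) lam) /\
  (forall i j, (i < d')%nat -> (j < d')%nat -> i <> j ->
     forall x : R, ~ ((e i - eps < x < e i + eps) /\ (e j - eps < x < e j + eps))) /\
  (forall i, (i < d')%nat ->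
     exists lam, eigenvalue d H lam /\ in_interval (e i - eps) (e i + eps) lam).

Definition in_eigen_span (d : nat) (H : Mat) (a b : R) (v : Vec) : Prop :=
  exists l : list (C * Vec),
    (forall p, In p l -> in_interval a b (fst p) /\
        veq d (mapply d H (snd p)) (fun i => Cmul (fst p) (snd p i))) /\
    veq d v (fun i => fold_right (fun p acc => Cadd (snd p i) acc) C0 l).

Definition orth_proj_onto (d : nat) (P : Mat) (S : Vec -> Prop) : Prop :=
  hermitian d P /\ meq d (mmul d P P) P /\
  forall v : Vec, S v <-> veq d (mapply d P v) v.

Definition povm (d m : nat) (F : nat -> Mat) : Prop :=
  (forall k, (k < m)%nat -> psd d (F k)) /\ meq d (msumn m F) mid.

(* Diagonalise H = P^* diag(lam) P.  The orthogonal projection onto the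
   eigenvectors with eigenvalue in the i-th window is the spectral indicator of
   that window, so the approximate state and the Gibbs state are both diagonal
   in the eigenbasis of H, with weights exp(-beta c_k) / Z~ and
   exp(-beta lam_k) / Z, where c_k is the centre of the window containing lam_k
   and |c_k - lam_k| < eps.  The trace norm of a matrix that is diagonal in an
   orthonormal basis is the l1-norm of its eigenvalues, and a POVM maps that
   difference to a difference of distributions through a stochastic matrix,
   which cannot increase the l1-norm.  It remains to compare two Gibbs
   distributions whose energies differ by less than t = beta eps pointwise:
   after cross-multiplying, every term is controlled by
   |e^u - e^v| <= sqrt t (e^u + e^v) for |u|, |v| < t, i.e. by tanh t <= sqrt t,
   which gives the bound 2 sqrt t = sqrt (4 eps beta). *)

From Pilot Require Import Defs.
From Stdlib Require Import Reals Lra Psatz List ClassicalEpsilon Classical.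
From mathcomp Require Import all_boot all_order all_algebra complex Rstruct.
From mathcomp Require Import sesquilinear spectral.
Import GRing.Theory Num.Theory Num.Def Order.TTheory.
Set Implicit Arguments. Unset Strict Implicit. Unset Printing Implicit Defensive.
Open Scope R_scope.

Lemma oneB_le_oneD_mul_pow4 s : 0 <= s <= 1 ->
  1 - s <= (1 + s) * (1 - s * s / 2) ^ 4.
Proof.
move=> hs.
have h3 : 0 <= s ^ 3 by apply: pow_le; lra.
have h43 : s ^ 4 <= s ^ 3 by rewrite /= ; nra.
have h54 : s ^ 5 <= s ^ 4 by rewrite /= ; nra.
have h65 : s ^ 6 <= s ^ 5 by rewrite /= ; nra.
have h7 : 0 <= s ^ 7 by apply: pow_le; lra.
have h8 : 0 <= s ^ 8 by apply: pow_le; lra.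
have -> : (1 + s) * (1 - s * s / 2) ^ 4 = (1 - s) + s * (2 - 2*s - 2*s^2 + 3/2*s^3 + 3/2*s^4
            - 1/2*s^5 - 1/2*s^6 + 1/16*s^7 + 1/16*s^8) by field.
suff : 0 <= 2 - 2*s - 2*s^2 + 3/2*s^3 + 3/2*s^4 - 1/2*s^5 - 1/2*s^6 + 1/16*s^7 + 1/16*s^8 by nra.
nra.
Qed.

Lemma exp_mul_oneB_le1 y : exp y * (1 - y) <= 1.
Proof.
have := exp_ineq1_le (- y); have := exp_pos y.
have : exp y * exp (- y) = 1 by rewrite -exp_plus Rplus_opp_r exp_0.
nra.
Qed.

(* tanh(w/2) <= s whenever w <= 2 s^2; the factor exp(s^2/2) is compared with
   1/(1 - s^2/2) four times. *)
Lemma exp_mul_oneB_le_oneD w s : 0 <= s <= 1 -> w <= 2 * s * s ->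
  exp w * (1 - s) <= 1 + s.
Proof.
move=> hs hw.
set E := exp (s * s / 2); set q := 1 - s * s / 2.
have hEq : E * q <= 1 by apply: exp_mul_oneB_le1.
have hE : 0 < E by apply: exp_pos.
have hq : 1/2 <= q <= 1 by rewrite /q; nra.
have hwE : exp w <= E ^ 4.
  have -> : E ^ 4 = exp (2 * s * s) by rewrite /E /= Rmult_1_r -!exp_plus; congr exp; lra.
  case: (Rle_lt_or_eq_dec _ _ hw) => [h|->]; last exact: Rle_refl.
  by left; apply: exp_increasing.
have hpoly := oneB_le_oneD_mul_pow4 hs; rewrite -/q in hpoly.
have hEq4 : E ^ 4 * q ^ 4 <= 1.
  have hEq0 : 0 <= E * q by nra.
  have h2 : (E * q) * (E * q) <= 1 by nra.
  rewrite /= !Rmult_1_r; nra.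
have : 0 <= E ^ 4 * q ^ 4 by apply: Rmult_le_pos; apply: pow_le; lra.
have : 0 <= E ^ 4 by apply: pow_le; lra.
nra.
Qed.

Lemma Rabs_exp_sub_le u v t : 0 < t -> Rabs u < t -> Rabs v < t ->
  Rabs (exp u - exp v) <= sqrt t * (exp u + exp v).
Proof.
wlog hvu : u v / v <= u.
  move=> hw ht hu hv; case: (Rle_dec v u) => [|/Rnot_le_lt] h; first exact: hw.
  by rewrite Rabs_minus_sym Rplus_comm; apply: hw => //; lra.
move=> ht /Rabs_def2 hu /Rabs_def2 hv.
have hu0 := exp_pos u; have hv0 := exp_pos v.
have hle : exp v <= exp u.
  by case: (Rle_lt_or_eq_dec _ _ hvu) => [/exp_increasing|->]; lra.
rewrite Rabs_pos_eq; last lra.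
have hs0 := sqrt_pos t.
case: (Rle_dec t 1) => [ht1|/Rnot_le_lt ht1].
- have hs1 : sqrt t <= 1 by rewrite -sqrt_1; apply: sqrt_le_1_alt.
  have hss : sqrt t * sqrt t = t by apply: sqrt_sqrt; lra.
  have := @exp_mul_oneB_le_oneD (u - v) (sqrt t) (conj hs0 hs1) ltac:(nra).
  have -> : exp u = exp (u - v) * exp v by rewrite -exp_plus; congr exp; ring.
  nra.
- have : 1 < sqrt t by rewrite -sqrt_1; apply: sqrt_lt_1_alt; lra.
  nra.
Qed.

Lemma Rabs_exp_cross_le cj gj ck gk t : 0 < t ->
  Rabs (cj - gj) < t -> Rabs (ck - gk) < t ->
  Rabs (exp cj * exp gk - exp gj * exp ck) <=
    sqrt t * (exp cj * exp gk + exp gj * exp ck).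
Proof.
move=> ht hj hk.
have -> : exp cj * exp gk = exp (gj + gk) * exp (cj - gj).
  by rewrite -!exp_plus; congr exp; ring.
have -> : exp gj * exp ck = exp (gj + gk) * exp (ck - gk).
  by rewrite -!exp_plus; congr exp; ring.
rewrite -Rmult_minus_distr_l Rabs_mult Rabs_pos_eq; last exact/Rlt_le/exp_pos.
have := Rabs_exp_sub_le ht hj hk; have := exp_pos (gj + gk); nra.
Qed.

Lemma sqrt_4mul a b : 0 <= a -> 0 <= b -> 2 * sqrt (b * a) = sqrt (4 * a * b).
Proof.
move=> ha hb; rewrite (_ : 4 * a * b = (2 * 2) * (b * a)); last ring.
by rewrite (sqrt_mult (2 * 2)) ?sqrt_square //; nra.
Qed.

Local Open Scope ring_scope.
Local Open Scope sesquilinear_scope.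

Lemma sum_exp_gt0 n (f : 'I_n.+1 -> R) : 0 < \sum_k exp (f k).
Proof.
rewrite big_ord_recl ltr_pwDl //; first exact/RltP/exp_pos.
by apply: sumr_ge0 => i _; exact/RleP/Rlt_le/exp_pos.
Qed.

Lemma gibbs_weights_l1_le n (g c : 'I_n -> R) t : 0 < t ->
  (forall j, `|c j - g j| < t) ->
  \sum_j `|exp (c j) / \sum_k exp (c k) - exp (g j) / \sum_k exp (g k)|
    <= (2 : R) * sqrt t.
Proof.
move=> ht hcg; case: n g c hcg => [|n] g c hcg.
  by rewrite big_ord0 -RmultE -R0E; apply/RleP; have := sqrt_pos t; lra.
set A := \sum_k exp (g k); set B := \sum_k exp (c k).
have hA : 0 < A := sum_exp_gt0 g.
have hAB : 0 < A * B by rewrite mulr_gt0 ?sum_exp_gt0.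
set w := fun j k => exp (c j) * exp (g k) + exp (g j) * exp (c k).
have hcross j k : `|exp (c j) * exp (g k) - exp (g j) * exp (c k)| <= sqrt t * w j k.
  apply/RleP; rewrite -RabsE.
  by apply: Rabs_exp_cross_le; apply/RltP; rewrite // RabsE RminusE.
have hterm j : exp (c j) / B - exp (g j) / A =
    (\sum_k (exp (c j) * exp (g k) - exp (g j) * exp (c k))) / (A * B).
  have hB0 : B != 0 by rewrite lt0r_neq0 ?sum_exp_gt0.
  rewrite sumrB -!mulr_sumr -/A -/B mulrBl invfM mulrA mulfK ?lt0r_neq0 //.
  by rewrite [A^-1 * _]mulrC mulrA mulfK.
have hw : \sum_j \sum_k w j k = (2 : R) * (A * B).
  rewrite /w; under eq_bigr => j _ do rewrite big_split /= -!mulr_sumr.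
  rewrite big_split /= -!mulr_suml -/A -/B.
  by rewrite -RplusE -!RmultE; lra.
apply: (@le_trans _ _ (\sum_j (\sum_k sqrt t * w j k) / (A * B))).
  apply: ler_sum => j _; rewrite hterm normf_div (gtr0_norm hAB).
  rewrite ler_pM2r ?invr_gt0 //.
  by apply: (le_trans (ler_norm_sum _ _ _)); apply: ler_sum => k _; exact: hcross.
rewrite -mulr_suml; under eq_bigr => j _ do rewrite -mulr_sumr.
by rewrite -mulr_sumr hw mulrA mulfK ?lt0r_neq0 // mulrC.
Qed.

Notation CC := (complex R).

Definition toC (z : Defs.C) : CC := Complex (Defs.Re z) (Defs.Im z).
Definition ofC (z : CC) : Defs.C := mkC (complex.Re z) (complex.Im z).

Lemma toCK : cancel toC ofC. Proof. by case. Qed.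
Lemma ofCK : cancel ofC toC. Proof. by case. Qed.
Lemma toC_inj : injective toC. Proof. exact: can_inj toCK. Qed.
Lemma toC_add a b : toC (Cadd a b) = toC a + toC b. Proof. by case: a; case: b. Qed.
Lemma toC_sub a b : toC (Csub a b) = toC a - toC b. Proof. by case: a; case: b. Qed.
Lemma toC_mul a b : toC (Cmul a b) = toC a * toC b. Proof. by case: a; case: b. Qed.
Lemma toC_conj a : toC (Cconj a) = conjC (toC a). Proof. by case: a. Qed.
Lemma toC_RtoC r : toC (RtoC r) = r%:C%C. Proof. by []. Qed.

Lemma toC_Csum n f : toC (Csum n f) = \sum_(i < n) toC (f i).
Proof. by elim: n => [|n IH]; rewrite ?big_ord0 // big_ord_recr /= toC_add IH. Qed.

Lemma RsumE n f : Rsum n f = \sum_(i < n) f i.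
Proof. by elim: n => [|n IH]; rewrite ?big_ord0 // big_ord_recr /= IH. Qed.

(* Only the entries with indices below [d] of a [Mat] are meaningful; [mx2M]
   pads with zeros. *)
Definition M2mx d (A : Mat) : 'M[CC]_d := \matrix_(i < d, j < d) toC (A i j).
Definition V2cv d (v : Vec) : 'cV[CC]_d := \col_(i < d) toC (v i).
Definition mx2M d (X : 'M[CC]_d) : Mat := fun i j =>
  if (insub i : option 'I_d, insub j : option 'I_d) is (Some i', Some j')
  then ofC (X i' j') else Defs.C0.
Definition cv2V d (x : 'cV[CC]_d) : Vec := fun i =>
  if (insub i : option 'I_d) is Some i' then ofC (x i' 0) else Defs.C0.
Arguments mx2M : clear implicits.
Arguments cv2V : clear implicits.

Lemma M2mxE d A (i j : 'I_d) : M2mx d A i j = toC (A i j).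
Proof. exact: mxE. Qed.

Lemma mx2MK d X : M2mx d (mx2M d X) = X.
Proof. by apply/matrixP => i j; rewrite mxE /mx2M !valK ofCK. Qed.

Lemma cv2VK d x : V2cv d (cv2V d x) = x.
Proof. by apply/matrixP => i j; rewrite mxE /cv2V valK ofCK ord1. Qed.

Lemma meqP d A B : meq d A B <-> M2mx d A = M2mx d B.
Proof.
split=> [h|/matrixP h i j /ssrnat.ltP hi /ssrnat.ltP hj].
  by apply/matrixP => i j; rewrite !mxE h //; apply/ssrnat.ltP.
by have := h (Ordinal hi) (Ordinal hj); rewrite !mxE => /toC_inj.
Qed.

Lemma veqP d v w : veq d v w <-> V2cv d v = V2cv d w.
Proof.
split=> [h|/matrixP h i /ssrnat.ltP hi].
  by apply/matrixP => i j; rewrite !mxE h //; apply/ssrnat.ltP.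
by have := h (Ordinal hi) 0; rewrite !mxE => /toC_inj.
Qed.

Lemma M2mxM d A B : M2mx d (mmul d A B) = M2mx d A *m M2mx d B.
Proof.
apply/matrixP => i j; rewrite !mxE toC_Csum; apply: eq_bigr => k _.
by rewrite toC_mul !mxE.
Qed.

Lemma M2mxD d A B : M2mx d (madd A B) = M2mx d A + M2mx d B.
Proof. by apply/matrixP => i j; rewrite !mxE toC_add. Qed.

Lemma M2mxB d A B : M2mx d (msub A B) = M2mx d A - M2mx d B.
Proof. by apply/matrixP => i j; rewrite !mxE toC_sub. Qed.

Lemma M2mxZ d c A : M2mx d (mscale c A) = toC c *: M2mx d A.
Proof. by apply/matrixP => i j; rewrite !mxE toC_mul. Qed.

Lemma M2mx_adj d A : M2mx d (madj A) = (M2mx d A)^t*.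
Proof. by apply/matrixP => i j; rewrite !mxE toC_conj. Qed.

Lemma M2mx1 d : M2mx d mid = 1%:M.
Proof.
apply/matrixP => i j; rewrite !mxE /mid.
case: (Nat.eqb_spec i j) => [/val_inj ->|hij]; first by rewrite eqxx.
by case: eqP => // eij; case: hij; rewrite eij.
Qed.

Lemma M2mx_sum d n f : M2mx d (msumn n f) = \sum_(k < n) M2mx d (f k).
Proof.
elim: n => [|n IH]; last by rewrite big_ord_recr /= M2mxD IH.
by rewrite big_ord0; apply/matrixP => i j; rewrite !mxE.
Qed.

Lemma toC_trace d A : toC (mtrace d A) = \tr (M2mx d A).
Proof. by rewrite toC_Csum; apply: eq_bigr => i _; rewrite mxE. Qed.

Lemma V2cvZ d c v : V2cv d (fun i => Cmul c (v i)) = toC c *: V2cv d v.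
Proof. by apply/matrixP => i j; rewrite !mxE toC_mul. Qed.

Lemma V2cv_apply d A v : V2cv d (mapply d A v) = M2mx d A *m V2cv d v.
Proof.
apply/matrixP => i j; rewrite !mxE toC_Csum; apply: eq_bigr => k _.
by rewrite toC_mul !mxE.
Qed.

Lemma toC_vdot d v w : toC (vdot d v w) = ((V2cv d v)^t* *m V2cv d w) 0 0.
Proof.
by rewrite toC_Csum !mxE; apply: eq_bigr => k _; rewrite toC_mul toC_conj !mxE.
Qed.

Lemma conj_eq_real (z : CC) : conjC z = z -> z = (complex.Re z)%:C%C.
Proof.
by case: z => a b [] hb; congr Complex; rewrite -RoppE -R0E in hb *; lra.
Qed.

Lemma conjC_real (r : R) : conjC (r%:C%C : CC) = r%:C%C.
Proof. by congr Complex; rewrite oppr0. Qed.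

Lemma hermitian_spectral d (X : 'M[CC]_d) : X^t* = X ->
  exists (P : 'M[CC]_d) (lam : 'I_d -> R),
    [/\ P *m P^t* = 1%:M, P^t* *m P = 1%:M &
        X = P^t* *m diag_mx (\row_k (lam k)%:C%C) *m P].
Proof.
move=> hX; have /orthomx_spectralP hE : X \is normalmx by apply/normalmxP; rewrite hX.
set P := spectralmx X in hE; set D := spectral_diag X in hE.
have PU : P \is unitarymx by apply: spectral_unitarymx.
have PU1 : P *m P^t* = 1%:M by apply/unitarymxP.
have hinv : invmx P = P^t* by apply: invmx_unitary.
have PU2 : P^t* *m P = 1%:M by rewrite -hinv mulVmx // unitarymx_unit.
rewrite hinv in hE.
have hD : diag_mx D = P *m X *m P^t*.
  by rewrite hE !mulmxA PU1 mul1mx -!mulmxA PU1 mulmx1.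
have hDa : (diag_mx D)^t* = diag_mx D.
  by rewrite hD !trmx_mul !map_mxM trmxCK hX mulmxA.
exists P, (fun k => complex.Re (D 0 k)); split => //.
rewrite {1}hE; congr (_ *m diag_mx _ *m _); apply/matrixP => i k.
rewrite !mxE ord1; apply: conj_eq_real.
by move/matrixP: hDa => /(_ k k); rewrite !mxE eqxx /= !mulr1n.
Qed.

Section SpectralCalculus.
Variables (d : nat) (P : 'M[CC]_d).
Hypothesis PU1 : P *m P^t* = 1%:M.
Hypothesis PU2 : P^t* *m P = 1%:M.

(* The matrix acting as [f k] on the [k]-th column of [P^t*] (see [spec_mx_col]);
   every function of a Hermitian matrix is represented this way. *)
Definition spec_mx (f : 'I_d -> CC) : 'M[CC]_d := P^t* *m diag_mx (\row_k f k) *m P.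

Lemma eq_spec_mx f g : f =1 g -> spec_mx f = spec_mx g.
Proof.
by move=> h; rewrite /spec_mx; congr (_ *m diag_mx _ *m _); apply/matrixP => i j; rewrite !mxE h.
Qed.

Lemma spec_mxM f g : spec_mx f *m spec_mx g = spec_mx (fun k => f k * g k).
Proof.
rewrite /spec_mx -!mulmxA; congr (_ *m _); rewrite !mulmxA.
rewrite -[diag_mx _ *m P *m P^t*]mulmxA PU1 mulmx1 mulmx_diag.
by congr (diag_mx _ *m _); apply/matrixP => i j; rewrite !mxE.
Qed.

Lemma spec_mx_sum (I : finType) (F : I -> 'I_d -> CC) :
  \sum_i spec_mx (F i) = spec_mx (fun k => \sum_i F i k).
Proof.
rewrite /spec_mx -mulmx_suml -mulmx_sumr -linear_sum /=; congr (_ *m diag_mx _ *m _).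
by apply/matrixP => i j; rewrite !mxE summxE; apply: eq_bigr => k _; rewrite mxE.
Qed.

Lemma spec_mxZ c f : c *: spec_mx f = spec_mx (fun k => c * f k).
Proof.
rewrite /spec_mx scalemxAl scalemxAr -linearZ /=; congr (_ *m diag_mx _ *m _).
by apply/matrixP => i j; rewrite !mxE.
Qed.

Lemma spec_mxB f g : spec_mx f - spec_mx g = spec_mx (fun k => f k - g k).
Proof.
rewrite /spec_mx -mulmxBl -mulmxBr -linearB /=; congr (_ *m diag_mx _ *m _).
by apply/matrixP => i j; rewrite !mxE.
Qed.

Lemma spec_mx_adj f : (spec_mx f)^t* = spec_mx (fun k => conjC (f k)).
Proof.
rewrite /spec_mx !trmx_mul !map_mxM trmxCK mulmxA; congr (_ *m _ *m _).
by rewrite tr_diag_mx map_diag_mx; congr diag_mx; apply/matrixP => i j; rewrite !mxE.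
Qed.

Lemma spec_mx_tr f : \tr (spec_mx f) = \sum_k f k.
Proof.
rewrite /spec_mx mxtrace_mulC mulmxA PU1 mul1mx mxtrace_diag.
by apply: eq_bigr => k _; rewrite mxE.
Qed.

Lemma spec_mx1 : spec_mx (fun _ => 1) = 1%:M.
Proof.
rewrite /spec_mx (_ : diag_mx _ = 1%:M) ?mulmx1 // -diag_const_mx.
by congr diag_mx; apply/matrixP => i j; rewrite !mxE.
Qed.

Lemma spec_mx_col f k : spec_mx f *m col k (P^t*) = f k *: col k (P^t*).
Proof.
rewrite !colE mulmxA /spec_mx -(mulmxA _ P) PU1 mulmx1 mul_mx_diag -!colE.
by apply/matrixP => i z; rewrite !mxE mulrC.
Qed.

End SpectralCalculus.

Lemma Un_cv_const (a : R) : Un_cv (fun _ => a) a.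
Proof. by move=> eps he; exists 0%N => n _; rewrite /Rdist Rminus_diag Rabs_R0. Qed.

Lemma Un_cv_sum_scale (I : Type) (s : seq I) (a : I -> R) (u : I -> nat -> R) l :
  (forall k, Un_cv (u k) (l k)) ->
  Un_cv (fun N => \sum_(k <- s) a k * u k N) (\sum_(k <- s) a k * l k).
Proof.
move=> hu; elim: s => [|x s IH].
  by rewrite big_nil; apply: Un_cv_ext _ _ _ _ (Un_cv_const 0) => n; rewrite big_nil.
rewrite big_cons.
apply: Un_cv_ext _ _ _ _ (CV_plus _ _ _ _ (CV_mult _ _ _ _ (Un_cv_const (a x)) (hu x)) IH).
by move=> n; rewrite big_cons.
Qed.

Lemma Re_sum_mulC (I : finType) (c : I -> CC) (h : I -> R) :
  complex.Re (\sum_l c l * (h l)%:C%C) = \sum_l complex.Re (c l) * h l.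
Proof.
apply: (big_rec2 (fun x y => complex.Re x = y)) => // l y1 y2 _ <-.
by case: (c l) => a b; case: y1 => x y /=; rewrite mulr0 subr0.
Qed.

Lemma Im_sum_mulC (I : finType) (c : I -> CC) (h : I -> R) :
  complex.Im (\sum_l c l * (h l)%:C%C) = \sum_l complex.Im (c l) * h l.
Proof.
apply: (big_rec2 (fun x y => complex.Im x = y)) => // l y1 y2 _ <-.
by case: (c l) => a b; case: y1 => x y /=; rewrite mulr0 add0r.
Qed.

Section MatrixExponential.
Variables (d : nat) (P : 'M[CC]_d).
Hypothesis PU1 : P *m P^t* = 1%:M.
Hypothesis PU2 : P^t* *m P = 1%:M.

Lemma spec_mx_entry (h : 'I_d -> R) i j :
  spec_mx P (fun k => (h k)%:C%C) i j = \sum_k (P^t* i k * P k j) * (h k)%:C%C.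
Proof. by rewrite /spec_mx mul_mx_diag !mxE; apply: eq_bigr => k _; rewrite !mxE mulrAC. Qed.

Lemma M2mx_mpow B f : M2mx d B = spec_mx P f ->
  forall k, M2mx d (mpow d B k) = spec_mx P (fun l => f l ^+ k).
Proof.
move=> hB; elim => [|k IH] /=.
  by rewrite M2mx1 -(spec_mx1 PU2); apply: eq_spec_mx => l; rewrite expr0.
by rewrite M2mxM IH hB (spec_mxM PU1); apply: eq_spec_mx => l; rewrite exprSr.
Qed.

Lemma M2mx_exp_partial B (g : 'I_d -> R) : M2mx d B = spec_mx P (fun l => (g l)%:C%C) ->
  forall N, M2mx d (exp_partial d B N) = spec_mx P (fun l => (E1 (g l) N)%:C%C).
Proof.
move=> hB N; rewrite /exp_partial M2mx_sum.
under eq_bigr => k _ do rewrite M2mxZ (M2mx_mpow hB) toC_RtoC spec_mxZ.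
rewrite spec_mx_sum; apply: eq_spec_mx => l.
rewrite /E1 sum_f_R0E big_mkord rmorph_sum; apply: eq_bigr => k _.
by rewrite RpowE -rmorphXn -rmorphM.
Qed.

Lemma mexp_spec_mx B (g : 'I_d -> R) : M2mx d B = spec_mx P (fun l => (g l)%:C%C) ->
  M2mx d (mexp d B) = spec_mx P (fun l => (exp (g l))%:C%C).
Proof.
move=> hB; set S := spec_mx P _.
have hcv (i j : 'I_d) :
    Un_cv (fun N => Defs.Re (exp_partial d B N i j)) (complex.Re (S i j)) /\
    Un_cv (fun N => Defs.Im (exp_partial d B N i j)) (complex.Im (S i j)).
  have hE N : toC (exp_partial d B N i j) = spec_mx P (fun l => (E1 (g l) N)%:C%C) i j.
    by rewrite -(M2mx_exp_partial hB) M2mxE.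
  rewrite /S spec_mx_entry Re_sum_mulC Im_sum_mulC.
  have hcvE := fun a => Un_cv_sum_scale (index_enum _) a (fun k => E1_cvg (g k)).
  split.
    apply: Un_cv_ext (hcvE (fun k => complex.Re (P^t* i k * P k j))) => N.
    by rewrite -[Defs.Re _]/(complex.Re (toC _)) hE spec_mx_entry Re_sum_mulC.
  apply: Un_cv_ext (hcvE (fun k => complex.Im (P^t* i k * P k j))) => N.
  by rewrite -[Defs.Im _]/(complex.Im (toC _)) hE spec_mx_entry Im_sum_mulC.
have hM : is_mexp d B (mx2M d S).
  move=> i j /ssrnat.ltP hi /ssrnat.ltP hj.
  have := hcv (Ordinal hi) (Ordinal hj).
  by rewrite -{1 2}(mx2MK S) !M2mxE /=; case: (mx2M d S i j).
have hspec := epsilon_spec (inhabits mzero) (is_mexp d B) (ex_intro _ _ hM).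
apply/matrixP => i j; have [hR hI] := hcv i j.
have [h1 h2] := hspec i j (ssrnat.ltP (ltn_ord i)) (ssrnat.ltP (ltn_ord j)).
rewrite M2mxE /mexp /toC (UL_sequence _ _ _ h1 hR) (UL_sequence _ _ _ h2 hI).
by case: (S i j).
Qed.

End MatrixExponential.

Lemma mulmx_colwise_id d (A B : 'M[CC]_d) :
  (forall j, A *m col j B = col j B) -> A *m B = B.
Proof.
move=> h; apply/matrixP => i j.
by have /matrixP /(_ i 0) := h j; rewrite !colE mulmxA -!colE !mxE.
Qed.

Lemma diag_mx_eigvec_mask n (lam : 'I_n -> R) (c : 'I_n -> bool) (m : R) (y : 'cV[CC]_n) :
  diag_mx (\row_k (lam k)%:C%C) *m y = m%:C%C *: y ->
  (forall k, lam k = m -> c k) -> diag_mx (\row_k (c k)%:R) *m y = y.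
Proof.
move=> /matrixP hy hc; apply/matrixP => k j; rewrite ord1 mul_diag_mx !mxE.
have := hy k 0; rewrite mul_diag_mx !mxE => /eqP.
rewrite -subr_eq0 -mulrBl mulf_eq0 subr_eq0 => /orP [/eqP /complexI /hc ->|/eqP ->].
  by rewrite mul1r.
by rewrite mulr0.
Qed.

Lemma V2cv_fold d (l : list (Defs.C * Vec)) :
  V2cv d (fun i => fold_right (fun p acc => Cadd (snd p i) acc) Defs.C0 l) =
  \sum_(p <- l) V2cv d (snd p).
Proof.
elim: l => [|p l IH]; first by rewrite big_nil; apply/matrixP => i j; rewrite !mxE.
by rewrite big_cons -IH; apply/matrixP => i j; rewrite !mxE /= toC_add.
Qed.

Section EigenProjection.
Variables (d : nat) (H : Mat) (P : 'M[CC]_d) (lam : 'I_d -> R).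
Hypothesis PU1 : P *m P^t* = 1%:M.
Hypothesis PU2 : P^t* *m P = 1%:M.
Hypothesis hH : M2mx d H = spec_mx P (fun k => (lam k)%:C%C).
Variables a b : R.

Definition in_window k : bool := (a < lam k) && (lam k < b).
Definition eigproj := spec_mx P (fun k => (in_window k)%:R).

Lemma eigproj_fix_eigvec mu w : in_interval a b mu ->
  veq d (mapply d H w) (fun i => Cmul mu (w i)) -> eigproj *m V2cv d w = V2cv d w.
Proof.
case: mu => mr mi [/= -> [ha hb]] /veqP; rewrite V2cv_apply V2cvZ hH.
move=> /(congr1 (mulmx P)); rewrite /spec_mx !mulmxA PU1 mul1mx -mulmxA -scalemxAr.
move=> /diag_mx_eigvec_mask hmask.
rewrite /eigproj /spec_mx -!mulmxA hmask ?mulmxA ?PU2 ?mul1mx // => k hk.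
by rewrite /in_window hk; apply/andP; split; apply/RltP.
Qed.

Lemma eigproj_fix_span v : in_eigen_span d H a b v -> eigproj *m V2cv d v = V2cv d v.
Proof.
case=> l [hl /veqP ->]; rewrite V2cv_fold.
elim: l hl => [|p l IH] hl; first by rewrite !big_nil mulmx0.
rewrite !big_cons mulmxDr IH => [|q hq]; last by apply: hl; right.
by have [h1 h2] := hl p (or_introl erefl); rewrite (eigproj_fix_eigvec h1 h2).
Qed.

Lemma eigproj_col_span j : in_eigen_span d H a b (cv2V d (col j eigproj)).
Proof.
exists [seq (RtoC (lam k), cv2V d (P k j *: col k (P^t*))) | k <- index_enum 'I_d & in_window k].
split=> [p /in_map_iff [k [<- /filter_In [_ /andP [/RltP h1 /RltP h2]]]]|].
  split=> //; apply/veqP; rewrite V2cv_apply V2cvZ cv2VK toC_RtoC /=.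
  by rewrite -scalemxAr hH (spec_mx_col PU1) !scalerA mulrC.
apply/veqP; rewrite V2cv_fold cv2VK big_map big_filter.
under eq_bigr => k _ do rewrite /= cv2VK.
apply/matrixP => i z; rewrite ord1 summxE !mxE mul_mx_diag [RHS]big_mkcond /=.
apply: eq_bigr => k _; rewrite !mxE; case: (in_window k); rewrite ?mulr1 ?mulr0 ?mul0r //.
by rewrite mulrC.
Qed.

Lemma eigproj_adj : eigproj^t* = eigproj.
Proof. by rewrite spec_mx_adj; apply: eq_spec_mx => k; rewrite conjC_nat. Qed.

Lemma orth_proj_eigproj Q : orth_proj_onto d Q (in_eigen_span d H a b) ->
  M2mx d Q = eigproj.
Proof.
move=> [/meqP hQa [/meqP hQQ hS]].
rewrite M2mx_adj in hQa; rewrite M2mxM in hQQ.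
set Q' := M2mx d Q in hQa hQQ *.
have hfix v : in_eigen_span d H a b v -> Q' *m V2cv d v = V2cv d v.
  by move=> /hS /veqP; rewrite V2cv_apply.
have h1 : Q' *m eigproj = eigproj.
  by apply: mulmx_colwise_id => j; have := hfix _ (eigproj_col_span j); rewrite cv2VK.
have h2 : eigproj *m Q' = Q'.
  apply: mulmx_colwise_id => j.
  have hs : in_eigen_span d H a b (cv2V d (col j Q')).
    by apply/hS/veqP; rewrite V2cv_apply cv2VK !colE mulmxA hQQ.
  by have := eigproj_fix_span hs; rewrite cv2VK.
by rewrite -hQa -h2 trmx_mul map_mxM eigproj_adj hQa h1.
Qed.

End EigenProjection.

Lemma Re_sum (I : finType) (c : I -> CC) : complex.Re (\sum_i c i) = \sum_i complex.Re (c i).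
Proof.
apply: (big_rec2 (fun x y => complex.Re x = y)) => // i y1 y2 _ <-.
by case: (c i) => a b; case: y1.
Qed.

Lemma Re_sum_real (I : finType) (r : I -> R) : complex.Re (\sum_k (r k)%:C%C) = \sum_k r k.
Proof. by rewrite -rmorph_sum. Qed.

Lemma quad_diag_mx n (c : 'I_n -> R) (y : 'cV[CC]_n) :
  complex.Re ((y^t* *m diag_mx (\row_k (c k)%:C%C) *m y) 0 0) =
  \sum_k c k * (complex.Re (y k 0) ^+ 2 + complex.Im (y k 0) ^+ 2).
Proof.
rewrite mul_mx_diag mxE Re_sum; apply: eq_bigr => k _; rewrite !mxE.
by case: (y k 0) => p q /=; rewrite !expr2 -!RmultE -!RplusE -!RoppE; lra.
Qed.

Section TraceNorm.
Variables (d : nat) (P : 'M[CC]_d).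
Hypothesis PU1 : P *m P^t* = 1%:M.

Lemma spec_mx_quad (c : 'I_d -> R) (v : 'cV[CC]_d) :
  complex.Re ((v^t* *m spec_mx P (fun k => (c k)%:C%C) *m v) 0 0) =
  \sum_k c k * (complex.Re ((P *m v) k 0) ^+ 2 + complex.Im ((P *m v) k 0) ^+ 2).
Proof. by rewrite -quad_diag_mx trmx_mul map_mxM !mulmxA. Qed.

Lemma psd_spec_mx_ge0 (y : 'I_d -> R) :
  (forall v : 'cV[CC]_d, 0 <= complex.Re ((v^t* *m spec_mx P (fun k => (y k)%:C%C) *m v) 0 0)) ->
  forall k, 0 <= y k.
Proof.
move=> hpsd k; have := hpsd (col k (P^t*)).
rewrite spec_mx_quad !colE mulmxA PU1 mul1mx (bigD1 k) //= big1 => [|l hl].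
  by rewrite !mxE eqxx /= expr1n expr0n /= !addr0 mulr1.
by rewrite !mxE (negPf hl) /= expr0n /= addr0 mulr0.
Qed.

End TraceNorm.

(* Uniqueness of the positive square root, in two eigenbases: the matrix [W]
   relating the bases intertwines [y^2] and [x^2], hence also [y] and [|x|]. *)
Lemma spec_mx_sqrt_unique d (P Q : 'M[CC]_d) (x y : 'I_d -> R) :
  P *m P^t* = 1%:M -> P^t* *m P = 1%:M -> Q *m Q^t* = 1%:M -> Q^t* *m Q = 1%:M ->
  (forall k, 0 <= y k) ->
  spec_mx Q (fun k => (y k ^+ 2)%:C%C) = spec_mx P (fun k => (x k ^+ 2)%:C%C) ->
  spec_mx Q (fun k => (y k)%:C%C) = spec_mx P (fun k => `|x k|%:C%C).
Proof.
move=> PU1 PU2 QU1 QU2 hy /(congr1 (fun M => Q *m M *m P^t*)).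
rewrite /spec_mx !mulmxA QU1 mul1mx -(mulmxA _ P) PU1 mulmx1 -mulmxA => hW.
set W := Q *m P^t* in hW.
have hQ : Q = W *m P by rewrite /W -mulmxA PU2 mulmx1.
have hQW : Q^t* *m W = P^t* by rewrite /W mulmxA QU2 mul1mx.
clearbody W.
have hW' : diag_mx (\row_k (y k)%:C%C) *m W = W *m diag_mx (\row_k `|x k|%:C%C).
  apply/matrixP => i j; rewrite mul_diag_mx mul_mx_diag !mxE.
  move/matrixP: hW => /(_ i j); rewrite mul_diag_mx mul_mx_diag !mxE.
  have [-> _|hne] := eqVneq (W i j) 0; first by rewrite mulr0 mul0r.
  rewrite [W i j * _]mulrC => h; have /complexI hsq := mulIf hne h.
  suff -> : y i = `|x j| by rewrite mulrC.
  by apply/eqP; rewrite -(@eqrXn2 _ 2) // real_normK ?num_real // hsq.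
by rewrite {2}hQ mulmxA -(mulmxA (Q^t*)) hW' mulmxA hQW.
Qed.

Lemma Re_vdot_mapply d (Y : Mat) v :
  Defs.Re (vdot d v (mapply d Y v)) =
  complex.Re (((V2cv d v)^t* *m M2mx d Y *m V2cv d v) 0 0).
Proof. by rewrite -[Defs.Re _]/(complex.Re (toC _)) toC_vdot V2cv_apply mulmxA. Qed.

Lemma trace_norm_spec_mx d (X : Mat) (P : 'M[CC]_d) (x : 'I_d -> R) :
  P *m P^t* = 1%:M -> P^t* *m P = 1%:M ->
  M2mx d X = spec_mx P (fun k => (x k)%:C%C) ->
  trace_norm d X = \sum_k `|x k|.
Proof.
move=> PU1 PU2 hX.
have hXX : M2mx d (mmul d (madj X) X) = spec_mx P (fun k => (x k ^+ 2)%:C%C).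
  rewrite M2mxM M2mx_adj hX spec_mx_adj (spec_mxM PU1); apply: eq_spec_mx => k.
  by rewrite conjC_real -rmorphM expr2.
pose is_abs Y := psd d Y /\ meq d (mmul d Y Y) (mmul d (madj X) X).
have habs : is_abs (mx2M d (spec_mx P (fun k => `|x k|%:C%C))).
  split; [split|].
  - apply/meqP; rewrite M2mx_adj mx2MK spec_mx_adj.
    by apply: eq_spec_mx => k; exact: conjC_real.
  - move=> v; apply/RleP; rewrite Re_vdot_mapply mx2MK spec_mx_quad.
    by apply: sumr_ge0 => k _; rewrite mulr_ge0 ?addr_ge0 ?sqr_ge0.
  - apply/meqP; rewrite M2mxM mx2MK (spec_mxM PU1) hXX; apply: eq_spec_mx => k.
    by rewrite -rmorphM -expr2 real_normK ?num_real.
have [[/meqP hYh hYp] /meqP hYY] : is_abs (mabs d X) :=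
  epsilon_spec (inhabits mzero) is_abs (ex_intro _ _ habs).
rewrite M2mx_adj in hYh; rewrite M2mxM hXX in hYY.
have [Q [y [QU1 QU2 hYe]]] := hermitian_spectral hYh.
rewrite -/(spec_mx Q _) in hYe.
have hy0 : forall k, 0 <= y k.
  apply: (psd_spec_mx_ge0 QU1) => v; rewrite -hYe -(cv2VK v) -Re_vdot_mapply.
  exact/RleP/hYp.
have hsq : spec_mx Q (fun k => (y k ^+ 2)%:C%C) = spec_mx P (fun k => (x k ^+ 2)%:C%C).
  by rewrite -hYY hYe (spec_mxM QU1); apply: eq_spec_mx => k; rewrite -rmorphM expr2.
rewrite /trace_norm -[Defs.Re _]/(complex.Re (toC _)) toC_trace hYe.
by rewrite (spec_mx_sqrt_unique PU1 PU2 QU1 QU2 hy0 hsq) (spec_mx_tr PU1) Re_sum_real.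
Qed.

Lemma quad_col n (A B : 'M[CC]_n) j :
  ((col j A)^t* *m B *m col j A) 0 0 = (A^t* *m B *m A) j j.
Proof.
rewrite !mxE; apply: eq_bigr => l _; rewrite !mxE; congr (_ * _).
by apply: eq_bigr => i _; rewrite !mxE.
Qed.

Lemma tr_mul_diag_Re n (G : 'M[CC]_n) (x : 'I_n -> R) :
  complex.Re (\tr (G *m diag_mx (\row_k (x k)%:C%C))) = \sum_j complex.Re (G j j) * x j.
Proof.
by rewrite mul_mx_diag /mxtrace; under eq_bigr => j _ do rewrite !mxE; exact: Re_sum_mulC.
Qed.

(* With [f k j := <P_j, F_k P_j>] for the eigenbasis [P_j], the weights [f k j]
   form, for each [j], a probability distribution over the outcomes [k]. *)
Lemma povm_l1_le d (P : 'M[CC]_d) (x : 'I_d -> R) m F (rho rhot : Mat) :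
  P *m P^t* = 1%:M -> povm d m F ->
  M2mx d rhot - M2mx d rho = spec_mx P (fun k => (x k)%:C%C) ->
  Rsum m (fun k => Rabs (Defs.Re (mtrace d (mmul d (F k) rhot)) -
                         Defs.Re (mtrace d (mmul d (F k) rho))))
    <= \sum_j `|x j|.
Proof.
move=> PU1 [hF /meqP hsum] hX.
pose f k j := complex.Re ((P *m M2mx d (F k) *m P^t*) j j).
have hdiff k : Defs.Re (mtrace d (mmul d (F k) rhot)) -
               Defs.Re (mtrace d (mmul d (F k) rho)) = \sum_j f k j * x j.
  rewrite -![Defs.Re _]/(complex.Re (toC _)) !toC_trace !M2mxM.
  rewrite -(raddfB (@complex.Re R : Rcomplex R -> R)) -linearB /= -mulmxBr hX /spec_mx.
  by rewrite mulmxA mxtrace_mulC !mulmxA tr_mul_diag_Re.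
have hf0 k j : (k < m)%N -> 0 <= f k j.
  move=> /ssrnat.ltP /hF [_ /(_ (cv2V d (col j (P^t*)))) /RleP].
  by rewrite Re_vdot_mapply cv2VK quad_col trmxCK.
have hf1 j : \sum_(k < m) f k j = 1.
  rewrite /f -Re_sum -summxE -mulmx_suml -mulmx_sumr -M2mx_sum hsum M2mx1.
  by rewrite mulmx1 PU1 mxE eqxx.
rewrite RsumE.
under eq_bigr => k _ do rewrite RabsE RminusE hdiff.
apply: (@le_trans _ _ (\sum_(k < m) \sum_j f k j * `|x j|)).
  apply: ler_sum => k _; apply: (le_trans (ler_norm_sum _ _ _)).
  by apply: ler_sum => j _; rewrite normrM ger0_norm ?hf0.
by rewrite exchange_big; apply: ler_sum => j _; rewrite -mulr_suml hf1 mul1r.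
Qed.

Lemma cv2V_neq0 d (x : 'cV[CC]_d) :
  x != 0 -> exists i, (i < d)%coq_nat /\ cv2V d x i <> Defs.C0.
Proof.
move=> /eqP hx; apply: NNPP => hall; apply: hx; apply/matrixP => i j.
rewrite ord1 !mxE -[x i 0]ofCK; suff -> : ofC (x i 0) = Defs.C0 by [].
apply: NNPP => hi; apply: hall; exists i; split; first exact/ssrnat.ltP.
by rewrite /cv2V valK.
Qed.

Section GibbsStates.
Variables (d : nat) (H : Mat) (P : 'M[CC]_d) (lam : 'I_d -> R).
Hypothesis PU1 : P *m P^t* = 1%:M.
Hypothesis PU2 : P^t* *m P = 1%:M.
Hypothesis hH : M2mx d H = spec_mx P (fun k => (lam k)%:C%C).

Lemma eigenvalue_spec_mx k : Defs.eigenvalue d H (RtoC (lam k)).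
Proof.
exists (cv2V d (col k (P^t*))); split.
  apply: cv2V_neq0; apply/eqP => /(congr1 (fun v => (P *m v) k 0)).
  by rewrite mulmx0 colE mulmxA PU1 mul1mx !mxE eqxx => /eqP; rewrite oner_eq0.
by apply/veqP; rewrite V2cv_apply V2cvZ cv2VK toC_RtoC hH (spec_mx_col PU1).
Qed.

Lemma gibbs_spec_mx beta :
  M2mx d (gibbs d beta H) =
  spec_mx P (fun k => (exp (- beta * lam k) / \sum_l exp (- beta * lam l))%:C%C).
Proof.
have hbH : M2mx d (mscale (RtoC (- beta)) H) = spec_mx P (fun k => (- beta * lam k)%:C%C).
  by rewrite M2mxZ hH spec_mxZ toC_RtoC; apply: eq_spec_mx => k; rewrite -rmorphM.
have hexp := mexp_spec_mx PU1 PU2 hbH.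
have hZ : partition_fn d beta H = \sum_k exp (- beta * lam k).
  rewrite /partition_fn -[Defs.Re _]/(complex.Re (toC _)) toC_trace hexp.
  by rewrite (spec_mx_tr PU1) Re_sum_real.
rewrite /gibbs M2mxZ hexp toC_RtoC spec_mxZ hZ; apply: eq_spec_mx => k.
by rewrite -rmorphM mulrC.
Qed.

End GibbsStates.

Section Covering.
Variables (d : nat) (H : Mat) (P : 'M[CC]_d) (lam : 'I_d -> R).
Hypothesis PU1 : P *m P^t* = 1%:M.
Hypothesis PU2 : P^t* *m P = 1%:M.
Hypothesis hH : M2mx d H = spec_mx P (fun k => (lam k)%:C%C).
Variables (beta eps : R) (d' : nat) (e : nat -> R) (Pt : nat -> Mat).
Hypothesis hcov : spectral_covering d H eps d' e.
Hypothesis hPt : forall i, (i < d')%coq_nat ->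
  orth_proj_onto d (Pt i) (in_eigen_span d H (e i - eps) (e i + eps)).

Definition window (i : 'I_d') k := in_window lam (e i - eps) (e i + eps) k.

Lemma window_exists k : exists i, window i k.
Proof.
have [i [/ssrnat.ltP hi [_ [h1 h2]]]] := hcov.1 _ (eigenvalue_spec_mx PU1 hH k).
by exists (Ordinal hi); apply/andP; split; apply/RltP.
Qed.

Lemma window_inj k i j : window i k -> window j k -> i = j.
Proof.
move=> /andP [/RltP h1 /RltP h2] /andP [/RltP h3 /RltP h4].
apply: val_inj; apply: NNPP => hij.
have hdisj := hcov.2.1 i j (ssrnat.ltP (ltn_ord i)) (ssrnat.ltP (ltn_ord j)) hij (lam k).
by apply: hdisj; split; split.
Qed.

Lemma sum_window_at k i0 (g : 'I_d' -> R) : window i0 k ->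
  \sum_i (window i k)%:R * g i = g i0.
Proof.
move=> h0; rewrite (bigD1 i0) // h0 mul1r /= big1 ?addr0 // => i hi.
case: (boolP (window i k)) => [hw|_]; last by rewrite mul0r.
by rewrite (window_inj hw h0) eqxx in hi.
Qed.

(* The centre [e i] of the window that contains [lam k]. *)
Definition rounded k := \sum_i (window i k)%:R * e i.

Lemma sum_window k (f : R -> R) : \sum_i (window i k)%:R * f (e i) = f (rounded k).
Proof.
have [i0 h0] := window_exists k.
by rewrite /rounded (sum_window_at (fun i => f (e i)) h0) (sum_window_at (fun i => e i) h0).
Qed.

Lemma rounded_near k : `|rounded k - lam k| < eps.
Proof.
have [i0 h0] := window_exists k; rewrite /rounded (sum_window_at (fun i => e i) h0).
move: h0 => /andP [/RltP h1 /RltP h2]; rewrite -RabsE -RminusE; apply/RltP/Rabs_def1; lra.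
Qed.

Lemma window_proj (i : 'I_d') : M2mx d (Pt i) = spec_mx P (fun k => (window i k)%:R).
Proof. exact: (orth_proj_eigproj PU1 PU2 hH (hPt (ssrnat.ltP (ltn_ord i)))). Qed.

Definition approx_partition : R :=
  Rsum d' (fun i => Defs.Re (mtrace d (Pt i)) * exp (- beta * e i)).
Definition approx_gibbs : Mat :=
  mscale (RtoC (/ approx_partition))
    (msumn d' (fun i => mscale (RtoC (exp (- beta * e i))) (Pt i))).

Lemma approx_partitionE : approx_partition = \sum_k exp (- beta * rounded k).
Proof.
have Re_nat (n : nat) : complex.Re (n%:R : CC) = n%:R.
  by rewrite -(rmorph_nat (real_complex R)).
rewrite /approx_partition RsumE.
under eq_bigr => i _ do rewrite -[Defs.Re _]/(complex.Re (toC _)) toC_trace window_proj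
  (spec_mx_tr PU1) Re_sum mulr_suml.
under eq_bigr => i _ do under eq_bigr => k _ do rewrite Re_nat.
rewrite exchange_big; apply: eq_bigr => k _.
exact: (sum_window k (fun r => exp (- beta * r))).
Qed.

Lemma approx_gibbs_spec_mx : M2mx d approx_gibbs =
  spec_mx P (fun k => (exp (- beta * rounded k) / \sum_l exp (- beta * rounded l))%:C%C).
Proof.
rewrite /approx_gibbs M2mxZ M2mx_sum toC_RtoC approx_partitionE.
under [X in _ *: X]eq_bigr => i _ do rewrite M2mxZ toC_RtoC window_proj spec_mxZ.
rewrite spec_mx_sum spec_mxZ; apply: eq_spec_mx => k.
rewrite -(sum_window k (fun r => exp (- beta * r))) mulrC rmorphM rmorph_sum /=.
by congr (_ * _); apply: eq_bigr => i _; rewrite rmorphM rmorph_nat mulrC.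
Qed.

Definition gibbs_gap k :=
  exp (- beta * rounded k) / \sum_l exp (- beta * rounded l) -
  exp (- beta * lam k) / \sum_l exp (- beta * lam l).

Lemma gibbs_gap_spec_mx :
  M2mx d approx_gibbs - M2mx d (gibbs d beta H) = spec_mx P (fun k => (gibbs_gap k)%:C%C).
Proof.
rewrite approx_gibbs_spec_mx (gibbs_spec_mx PU1 PU2 hH) spec_mxB.
by apply: eq_spec_mx => k; rewrite -rmorphB.
Qed.

Lemma sum_gibbs_gap_le : 0 < beta -> 0 < eps ->
  \sum_k `|gibbs_gap k| <= sqrt ((4 : R) * eps * beta).
Proof.
move=> hb he.
have hnear k : `|- beta * rounded k - - beta * lam k| < beta * eps.
  by rewrite -mulrBr normrM normrN (gtr0_norm hb) (ltr_pM2l hb) rounded_near.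
rewrite -sqrt_4mul; [|exact/RleP/ltW|exact/RleP/ltW].
exact: gibbs_weights_l1_le (mulr_gt0 hb he) hnear.
Qed.

End Covering.

Local Close Scope ring_scope.

Theorem theorem3p3 (d : nat) (H : Mat) (beta eps : R) (d' : nat) (e : nat -> R)
  (Pt : nat -> Mat) :
  Defs.hermitian d H -> 0 < beta -> 0 < eps ->
  spectral_covering d H eps d' e ->
  (forall i, (i < d')%coq_nat ->
     orth_proj_onto d (Pt i) (in_eigen_span d H (e i - eps) (e i + eps))) ->
  let n := fun i => Defs.Re (mtrace d (Pt i)) in
  let Zt := Rsum d' (fun i => n i * exp (- beta * e i)) in
  let rhot := mscale (RtoC (/ Zt))
                (msumn d' (fun i => mscale (RtoC (exp (- beta * e i))) (Pt i))) in
  let rho := gibbs d beta H in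
  trace_norm d (msub rhot rho) <= sqrt (4 * eps * beta) /\
  (forall (m : nat) (F : nat -> Mat), povm d m F ->
     let p := fun k => Defs.Re (mtrace d (mmul d (F k) rho)) in
     let pt := fun k => Defs.Re (mtrace d (mmul d (F k) rhot)) in
     Rsum m (fun k => Rabs (pt k - p k)) <= sqrt (4 * eps * beta)).
Proof.
move=> hH hb he hcov hPt n Zt rhot rho.
have /hermitian_spectral [P [lam [PU1 PU2 hHP]]] : (M2mx d H)^t* = M2mx d H.
  by move/meqP: hH; rewrite M2mx_adj.
have hgap := gibbs_gap_spec_mx PU1 PU2 hHP beta hcov hPt.
have /RleP hsum := sum_gibbs_gap_le PU1 hHP hcov (introT RltP hb) (introT RltP he).
split; first by rewrite (trace_norm_spec_mx PU1 PU2 (etrans (M2mxB _ _ _) hgap)).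
move=> m F hF p pt.
exact: Rle_trans (elimT RleP (povm_l1_le PU1 hF hgap)) hsum.
Qed.
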